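(* Let $\kappa\ge2$ and let $\psi^+$ be a rooted caterpillar tree on $n\ge1$ taxa. Then the dimension of the $\mathrm{UE}_\kappa(\psi^+)$ model (i.e., of its affine closure) is $$d_\kappa(\psi^+)=\frac{\kappa^n+\kappa}{2}-1.$$
   Context: For a rooted binary topological tree $\psi^+$ on $X$, $d_\kappa(\psi^+)$ is the dimension of the affine space of real $|X|$-way $\kappa\times\cdots\times\kappa$ tensors $P$ (one index per taxon) whose entries sum to 1 and such that for every $Y\subseteq X$ and every 2-clade $\{a,b\}$ of the induced rooted subtree $\psi^+|_Y$, the marginalization $P_Y$ is invariant under exchanging the $a$ and $b$ indices. A 2-clade is a pair of leaves that are exactly the leaf descendants of some vertex. A rooted caterpillar on $n$ taxa is a rooted binary tree in which every internal vertex has at least one leaf child (i.e., of the form $(x_1,(x_2,(\dots,(x_{n-1},x_n))))$). *)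

From HB Require Import structures.
From mathcomp Require Import all_boot all_order all_algebra.
From mathcomp Require Import perm.
From mathcomp Require Import reals.
Set Implicit Arguments. Unset Strict Implicit. Unset Printing Implicit Defensive.
Import Order.TTheory GRing.Theory Num.Theory.
Local Open Scope ring_scope.

Inductive rtree (T : Type) : Type :=
| Leaf of T
| Node of rtree T & rtree T.
Arguments Leaf {T}.
Arguments Node {T}.

Fixpoint leaves (T : Type) (t : rtree T) : seq T :=
  match t with
  | Leaf x => [:: x]
  | Node l r => leaves l ++ leaves r
  end.

(** All subtrees (= all vertices, each viewed as the subtree it roots). *)
Fixpoint subtrees (T : Type) (t : rtree T) : seq (rtree T) :=
  match t with
  | Leaf x => [:: t]
  | Node l r => t :: (subtrees l ++ subtrees r)
  end.

Definition tree_on (n : nat) (t : rtree 'I_n) : Prop :=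
  perm_eq (leaves t) (enum 'I_n).

Definition is_leaf (T : Type) (t : rtree T) : bool :=
  if t is Leaf _ then true else false.

Fixpoint caterpillar (T : Type) (t : rtree T) : bool :=
  match t with
  | Leaf _ => true
  | Node l r => (is_leaf l || is_leaf r) && caterpillar l && caterpillar r
  end.

(** Induced rooted subtree on Y: delete leaves outside Y and suppress the
    resulting degree-two vertices ([None] when no leaf survives). *)
Fixpoint restrict (T : eqType) (Y : pred T) (t : rtree T) : option (rtree T) :=
  match t with
  | Leaf x => if Y x then Some (Leaf x) else None
  | Node l r =>
      match restrict Y l, restrict Y r with
      | Some l', Some r' => Some (Node l' r')
      | Some l', None => Some l'
      | None, Some r' => Some r'
      | None, None => None
      end
  end.

Definition two_clade (T : eqType) (t : rtree T) (a b : T) : bool :=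
  (a != b) && has (fun s => perm_eq (leaves s) [:: a; b]) (subtrees t).

(** Tensors: real entries indexed by assignments of a state in 'I_k to each
    taxon in 'I_n (i.e. n-way k x ... x k tensors). *)
Definition tensor (R : realType) (n k : nat) :=
  {ffun {ffun 'I_n -> 'I_k} -> R^o}.

(** Marginalization onto Y, evaluated at (the restriction to Y of) sigma. *)
Definition marg (R : realType) (n k : nat) (P : tensor R n k)
  (Y : {set 'I_n}) (sigma : {ffun 'I_n -> 'I_k}) : R :=
  \sum_(tau : {ffun 'I_n -> 'I_k} | [forall i in Y, tau i == sigma i]) P tau.

Definition swap_idx (n k : nat) (a b : 'I_n) (sigma : {ffun 'I_n -> 'I_k})
  : {ffun 'I_n -> 'I_k} := [ffun i => sigma (tperm a b i)].

Definition UE_set (R : realType) (n k : nat) (t : rtree 'I_n)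
  (P : tensor R n k) : Prop :=
  \sum_(sigma : {ffun 'I_n -> 'I_k}) P sigma = 1 /\
  forall (Y : {set 'I_n}) (t' : rtree 'I_n) (a b : 'I_n),
    restrict (mem Y) t = Some t' -> two_clade t' a b ->
    forall sigma, marg P Y sigma = marg P Y (swap_idx a b sigma).

Definition affine_dim (R : fieldType) (V : vectType R) (S : V -> Prop)
  (d : nat) : Prop :=
  (exists P, S P) /\
  exists U : {vspace V},
    [/\ \dim U = d,
        (forall P Q, S P -> S Q -> P - Q \in U) &
        (forall W : {vspace V},
            (forall P Q, S P -> S Q -> P - Q \in W) -> (U <= W)%VS)].

From HB Require Import structures.
From mathcomp Require Import all_boot all_order all_algebra.
From mathcomp Require Import reals.
From mathcomp Require Import perm zify ring.
Set Implicit Arguments. Unset Strict Implicit. Unset Printing Implicit Defensive.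
Import GRing.Theory.

(* Fix a state z.  For a set X of taxa and a family C of 2-clade constraints,
   [cspace X C] is the linear space of tensors that vanish off the assignments
   equal to z outside X and whose marginals are invariant under the exchanges
   listed in C.  For a tree t with leaf set X, [tree_space t] uses the
   constraints of all induced subtrees of t.  When t is on all taxa, the UE
   set is the affine hyperplane {P in tree_space t | sum P = 1}, whose affine
   dimension is \dim (tree_space t) - 1 (lemma [affine_dim_hyperplane]).

   The dimension is computed by grafting one leaf x onto a tree t'
   (lemma [tree_space_graft]): P lies in the space of (x, t') iff each slice
   P(x = c) lies in the space of t' and, for one fixed leaf y0 of t', the
   {x, y0}-marginal of P is symmetric.  Indeed the only new 2-clades are
   {x, y} with y the unique leaf of t' kept in Y, and all one-taxon marginals
   of tensors of the space of t' coincide, so every {x, y} reduces to {x, y0}.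
   The slices give a k-fold direct sum and the symmetry conditions are k(k-1)/2
   independent linear forms, whence 2 dim(x, t') = k (k^|t'| + k) - k(k-1),
   and by induction along the caterpillar 2 \dim (tree_space t) = k^n + k. *)

(* Strictly increasing pairs of states, indexing the symmetry conditions of a
   2-clade; there are k(k-1)/2 of them. *)
Definition spairs (k : nat) := {p : 'I_k * 'I_k | p.1 < p.2}.

Lemma card_spairs k : #|{: spairs k}| * 2 = k * k.-1.
Proof.
rewrite card_sig.
have card_sum (A : pred ('I_k * 'I_k)) : #|A| = \sum_p A p.
  by rewrite -sum1_card big_mkcond; apply: eq_bigr => p _; rewrite unfold_in; case: (A p).
have gt_lt : \sum_(p : 'I_k * 'I_k) (p.2 < p.1) = \sum_(p : 'I_k * 'I_k) (p.1 < p.2).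
  have inj : injective (fun p : 'I_k * 'I_k => (p.2, p.1)) by case=> ? ? [? ?] [-> ->].
  by rewrite [RHS](reindex_inj inj).
have diag : \sum_(p : 'I_k * 'I_k) (p.1 == p.2) = k.
  rewrite -(pair_big xpredT xpredT (fun i j : 'I_k => nat_of_bool (i == j))) /=.
  rewrite -[RHS]card_ord -sum1_card; apply: eq_bigr => i _.
  by rewrite (bigD1 i) //= eqxx big1 // => j /negbTE; rewrite eq_sym => ->.
have trichotomy : \sum_(p : 'I_k * 'I_k) ((p.1 < p.2) + (p.2 < p.1) + (p.1 == p.2)) = k * k.
  rewrite (eq_bigr (fun _ => 1)) ?sum_nat_const ?card_prod ?card_ord ?muln1 //.
  by move=> [i j] _ /=; rewrite -val_eqE /=; case: (ltngtP i j).
rewrite card_sum; move: trichotomy; rewrite !big_split /= gt_lt diag; clear.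
by case: k => [|k'] /=; nia.
Qed.

Local Open Scope ring_scope.

Lemma affine_dim_hyperplane (K : fieldType) (V : vectType K) (D : {vspace V})
    (f : 'Hom(V, K^o)) (S : V -> Prop) (P0 : V) :
  (forall P, S P <-> f P = 1 /\ P \in D) -> S P0 ->
  affine_dim S (\dim D - 1)%N.
Proof.
move=> SE SP0; have [fP0 P0D] := (SE P0).1 SP0.
split; first by exists P0.
exists (D :&: lker f)%VS; split.
- have dim_img : \dim (f @: D) = 1%N.
    apply/eqP; rewrite eqn_leq lt0n dimv_eq0 andbC.
    rewrite -[X in (_ <= X)%N](dimvf K^o) dimvS ?subvf ?andbT //.
    apply/eqP => img0; have := memv_img f P0D.
    by rewrite img0 memv0 fP0 oner_eq0.
  by rewrite -(limg_ker_dim f D) dim_img addnK.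
- move=> P Q /SE[fP PD] /SE[fQ QD].
  by rewrite memv_cap memvB // memv_ker linearB /= fP fQ subrr eqxx.
- move=> W HW; apply/subvP => u /memv_capP[uD]; rewrite memv_ker => /eqP fu.
  have Su : S (u + P0) by apply/SE; rewrite linearD /= fu add0r memvD.
  by have := HW _ _ Su SP0; rewrite addrK.
Qed.

Section Trees.
Variable T : eqType.
Implicit Types (t l r s : rtree T) (Y : pred T) (a b x y : T).

Lemma size_leaves_gt0 t : (0 < size (leaves t))%N.
Proof. elim: t => [x|l IHl r _] //=; rewrite size_cat; lia. Qed.

Lemma restrict_leaves Y t :
  (if restrict Y t is Some s then leaves s else [::]) = filter Y (leaves t).
Proof.
elim: t => [x|l IHl r IHr] /=; first by case: (Y x).
rewrite filter_cat -IHl -IHr.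
by case: (restrict Y l) => [l'|]; case: (restrict Y r) => [r'|] //=; rewrite cats0.
Qed.

Lemma restrict_eq_in Y Y' t :
  {in leaves t, Y =1 Y'} -> restrict Y t = restrict Y' t.
Proof.
elim: t => [x|l IHl r IHr] /= H; first by rewrite H // mem_seq1.
rewrite IHl ?IHr // => i Hi; apply: H; by rewrite mem_cat Hi ?orbT.
Qed.

Lemma leaves_eq1 s y : leaves s = [:: y] -> s = Leaf y.
Proof.
case: s => [x [->]//|l r /= /(congr1 size)]; rewrite size_cat /=.
have:=size_leaves_gt0 l; have:=size_leaves_gt0 r; lia.
Qed.

Lemma restrict_single Y t y : filter Y (leaves t) = [:: y] ->
  restrict Y t = Some (Leaf y).
Proof.
move=> H; have := restrict_leaves Y t; rewrite H.
by case: (restrict Y t) => [s|] // /leaves_eq1 ->.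
Qed.

Lemma has_subtrees_leaves (p : pred (rtree T)) t : has p (subtrees t) ->
  exists2 s, p s & {subset leaves s <= leaves t}.
Proof.
elim: t => [x|l IHl r IHr] /=; first by rewrite orbF => ps; exists (Leaf x).
case/orP => [ps|]; first by exists (Node l r).
rewrite has_cat => /orP[/IHl|/IHr] [s ps sub]; exists s => // i /sub;
by rewrite mem_cat => ->; rewrite ?orbT.
Qed.

Lemma has_subtrees_self (p : pred (rtree T)) t : p t -> has p (subtrees t).
Proof. by case: t => [x|l r] /= ->. Qed.

Lemma two_clade_mem t a b : two_clade t a b -> (a \in leaves t) && (b \in leaves t).
Proof.
case/andP => _ /has_subtrees_leaves [s Hp sub].
by rewrite !sub // (perm_mem Hp) !inE eqxx ?orbT.
Qed.

Lemma two_clade_NodeC l r a b : two_clade (Node l r) a b = two_clade (Node r l) a b.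
Proof.
rewrite /two_clade /= (perm_catC (leaves l)) !has_cat; congr (_ && (_ || _)).
exact: orbC.
Qed.

Lemma perm_eq_pair_size (s1 : seq T) a b :
  size s1 != 2%N -> perm_eq s1 [:: a; b] = false.
Proof. by move=> /eqP H; apply/negbTE/negP => /perm_size. Qed.

Definition induced_clade Y t a b :=
  if restrict Y t is Some s then two_clade s a b else false.

Lemma induced_clade_NodeC Y l r a b :
  induced_clade Y (Node l r) a b = induced_clade Y (Node r l) a b.
Proof.
rewrite /induced_clade /=.
case: (restrict Y l) => [l'|]; case: (restrict Y r) => [r'|] //.
exact: two_clade_NodeC.
Qed.

Lemma induced_clade_leaf Y x a b : induced_clade Y (Leaf x) a b = false.
Proof.
rewrite /induced_clade /=; case: (Y x) => //.
by rewrite /two_clade /= orbF perm_eq_pair_size ?andbF.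
Qed.

Lemma induced_clade_graft Y x t' a b : induced_clade Y (Node (Leaf x) t') a b =
  induced_clade Y t' a b || (Y x && (if restrict Y t' is Some (Leaf y)
       then (a != b) && perm_eq [:: x; y] [:: a; b] else false)).
Proof.
rewrite /induced_clade /=; case: (Y x) => /=; last first.
  by case: (restrict Y t') => [s|] //; rewrite orbF.
case: (restrict Y t') => [s|] /=.
  rewrite /two_clade /= (perm_eq_pair_size (s1:=[:: x])) //=.
  case: s => [y|l r] /=; first by rewrite (perm_eq_pair_size (s1:=[:: y])) //= andbF orbF.
  rewrite perm_eq_pair_size ?orbF //= size_cat.
  by have:=size_leaves_gt0 l; have:=size_leaves_gt0 r; lia.
by rewrite /two_clade /= orbF perm_eq_pair_size ?andbF.
Qed.

Lemma induced_clade_pair Y t a b :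
  perm_eq (filter Y (leaves t)) [:: a; b] -> a != b -> induced_clade Y t a b.
Proof.
move=> H ab; have := restrict_leaves Y t; rewrite /induced_clade.
case: (restrict Y t) => [s|] Hs; last by move: H; rewrite -Hs => /perm_size.
by rewrite /two_clade ab /=; apply: has_subtrees_self; rewrite Hs.
Qed.

Lemma induced_clade_mem Y t a b : induced_clade Y t a b ->
  [/\ Y a, Y b, a \in leaves t & b \in leaves t].
Proof.
rewrite /induced_clade; have := restrict_leaves Y t.
case: (restrict Y t) => [s|] // Hs /two_clade_mem /andP[].
by rewrite Hs !mem_filter => /andP[-> ->] /andP[-> ->].
Qed.

End Trees.

Section Tensors.
Variables (R : realType) (n k : nat) (z : 'I_k).
Local Notation F := {ffun 'I_n -> 'I_k}.
Local Notation V := (tensor R n k).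
Implicit Types (s u v t r : F) (P Q : V) (Y X : {set 'I_n}) (x y a b : 'I_n)
  (c d e : 'I_k) (C : {set 'I_n} -> 'I_n -> 'I_n -> bool).

Definition upd x e s : F := [ffun i => if i == x then e else s i].

Lemma updE x e s i : upd x e s i = if i == x then e else s i.
Proof. by rewrite ffunE. Qed.

Lemma upd_id x e s : s x = e -> upd x e s = s.
Proof. by move=> H; apply/ffunP => i; rewrite updE; case: eqP => // ->. Qed.

Lemma upd_upd x c e s : upd x c (upd x e s) = upd x c s.
Proof. by apply/ffunP => i; rewrite !updE; case: eqP. Qed.

Lemma upd_at x e s : upd x e s x = e.
Proof. by rewrite updE eqxx. Qed.

Lemma swapE a b s i : swap_idx a b s i = s (tperm a b i).
Proof. by rewrite ffunE. Qed.

Lemma swapK a b s : swap_idx a b (swap_idx a b s) = s.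
Proof. by apply/ffunP => i; rewrite !swapE tpermK. Qed.

Lemma swap_inj a b : injective (@swap_idx n k a b).
Proof. exact: can_inj (swapK a b). Qed.

Lemma swapC a b s : swap_idx a b s = swap_idx b a s.
Proof. by apply/ffunP => i; rewrite !swapE tpermC. Qed.

Lemma swap_fix a b s : s a = s b -> swap_idx a b s = s.
Proof. by move=> H; apply/ffunP => i; rewrite swapE; case: tpermP => [->|->|]. Qed.

Lemma swap_out a b x s : a != x -> b != x -> swap_idx a b s x = s x.
Proof. by move=> ax bx; rewrite swapE tpermD. Qed.

Lemma upd_swap a b x c s : a != x -> b != x ->
  upd x c (swap_idx a b s) = swap_idx a b (upd x c s).
Proof.
move=> ax bx; apply/ffunP => i; rewrite updE !swapE updE.
case: (i =P x) => [->|ix]; first by rewrite tpermD ?eqxx.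
suff -> : (tperm a b i == x) = false by [].
apply/negbTE/eqP => H; apply: ix; rewrite -(tpermK a b i) H tpermD //.
Qed.

Lemma sum_upd x (f : F -> R) :
  \sum_t f t = \sum_e \sum_(t : F | t x == z) f (upd x e t).
Proof.
rewrite (partition_big (fun t : F => t x) xpredT) //=; apply: eq_bigr => e _.
rewrite (reindex_onto (upd x e) (upd x z)) /=; last first.
  by move=> t /eqP H; rewrite upd_upd upd_id.
apply: eq_bigl => t; rewrite upd_at eqxx /= upd_upd.
by apply/eqP/eqP => [<-|/upd_id //]; rewrite upd_at.
Qed.

Definition agree Y u v := [forall i in Y, u i == v i].

Lemma agree_pair Y a b u v : Y = [set a; b] -> u a = v a -> u b = v b -> agree Y u v.
Proof.
by move=> -> ua ub; apply/forall_inP => i; rewrite !inE => /orP[] /eqP ->; apply/eqP.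
Qed.

Lemma agree_D1 x Y u v :
  agree Y u v = ((x \in Y) ==> (u x == v x)) && agree (Y :\ x) u v.
Proof.
rewrite /agree; apply/idP/idP => [/forall_inP H|/andP[/implyP H1 /forall_inP H2]].
  apply/andP; split; first by apply/implyP => /H.
  by apply/forall_inP => i; rewrite !inE => /andP[_ /H].
apply/forall_inP => i iY; case: (i =P x) => [ix|/eqP ix].
  by rewrite ix; apply: H1; rewrite -ix.
by apply: H2; rewrite !inE ix iY.
Qed.

Lemma agree_upd_notin x c X u v : x \notin X ->
  agree X (upd x c u) (upd x c v) = agree X u v.
Proof.
move=> xX; rewrite /agree; apply/forall_inP/forall_inP => H i iX; have := H i iX;
by rewrite !updE; case: (i =P x) => // ix; rewrite -ix iX in xX.
Qed.

Lemma agree_upd x c Y u v :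
  agree (x |: Y) (upd x c u) (upd x c v) = agree (Y :\ x) u v.
Proof.
rewrite (agree_D1 x) setU11 /= !upd_at eqxx /= agree_upd_notin ?setD11 //.
by rewrite setDUl setDv set0U.
Qed.

Lemma margE P Y s : marg P Y s = \sum_t (agree Y t s)%:R * P t.
Proof.
rewrite /marg big_mkcond; apply: eq_bigr => t _ /=; rewrite /agree.
by case: ifP; rewrite ?mul1r ?mul0r.
Qed.

Definition marg_at Y s (P : V) : R^o := marg P Y s.

Fact marg_at_lin Y s : linear (marg_at Y s).
Proof.
move=> w P Q; rewrite /marg_at !margE scaler_sumr -big_split /=.
apply: eq_bigr => t _; rewrite !ffunE mulrDr; congr (_ + _).
by rewrite /GRing.scale /= mulrCA.
Qed.
HB.instance Definition _ Y s :=
  GRing.isLinear.Build R V R^o _ (marg_at Y s) (marg_at_lin Y s).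

Lemma margD (w : R) P Q Y s : marg (w *: P + Q) Y s = w * marg P Y s + marg Q Y s.
Proof. exact: (linearP (marg_at Y s) w P Q). Qed.

Lemma margZ (w : R) P Y s : marg (w *: P) Y s = w * marg P Y s.
Proof. exact: (linearZZ (marg_at Y s) w P). Qed.

Lemma marg_sum (I : finType) (G : I -> V) Y s :
  marg (\sum_i G i) Y s = \sum_i marg (G i) Y s.
Proof. exact: (linear_sum (marg_at Y s)). Qed.

Lemma marg_agree P Y s s' : agree Y s s' -> marg P Y s = marg P Y s'.
Proof.
move=> /forall_inP H; rewrite /marg; apply: eq_bigl => t.
apply/forall_inP/forall_inP => H' i iY;
by rewrite (eqP (H' i iY)) ?(H i iY) // -(eqP (H i iY)).
Qed.

Definition delta r : V := [ffun t => (t == r)%:R].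

Lemma marg_delta r Y s : marg (delta r) Y s = (agree Y r s)%:R.
Proof.
rewrite margE (bigD1 r) //= big1 ?addr0 => [|t tr]; rewrite ffunE ?eqxx ?mulr1 //.
by rewrite (negbTE tr) mulr0.
Qed.

Lemma marg_sum_upd P x Y s : x \notin Y ->
  marg P Y s = \sum_e marg P (x |: Y) (upd x e s).
Proof.
move=> xY; under eq_bigr do rewrite margE.
rewrite exchange_big margE /=; apply: eq_bigr => t _; rewrite -mulr_suml.
congr (_ * _); rewrite (bigD1 (t x)) //= big1 ?addr0 => [|e et]; last first.
  case: (boolP (agree _ _ _)) => // /forall_inP /(_ x); rewrite !inE eqxx upd_at.
  by move=> /(_ isT) /eqP ex; rewrite ex eqxx in et.
by rewrite -{2}[t](@upd_id x (t x)) // agree_upd (agree_D1 x) (negbTE xY).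
Qed.

Lemma marg_swap_inv P Y a b s : (forall t, P (swap_idx a b t) = P t) ->
  a \in Y -> b \in Y -> marg P Y s = marg P Y (swap_idx a b s).
Proof.
move=> H aY bY; rewrite !margE (reindex_inj (@swap_inj a b)) /=.
apply: eq_bigr => t _; rewrite H; congr (_ * _); congr ((nat_of_bool _)%:R).
have tpermY i : (tperm a b i \in Y) = (i \in Y).
  by case: tpermP => [->|->|//]; rewrite ?aY ?bY.
apply/forall_inP/forall_inP => H' i iY; have := H' (tperm a b i);
by rewrite tpermY !swapE tpermK => /(_ iY).
Qed.

Definition supported X P := forall s i, i \notin X -> s i != z -> P s = 0.

Lemma supported_nz X P s : supported X P -> P s != 0 -> forall i, i \notin X -> s i = z.
Proof. by move=> HP Ps i iX; apply/eqP; apply: contraNT Ps => /(HP s i iX) ->. Qed.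

Lemma marg_supported X P Y Y' s : supported X P -> Y :&: X = Y' :&: X ->
  (forall i, i \in Y :|: Y' -> i \notin X -> s i = z) -> marg P Y s = marg P Y' s.
Proof.
move=> HP YX Hs; rewrite !margE; apply: eq_bigr => t _.
case: (P t =P 0) => [->|/eqP Pt]; first by rewrite !mulr0.
have tz := supported_nz HP Pt; congr (_ * _); congr ((nat_of_bool _)%:R).
have agreeW Y1 Y2 : Y1 :&: X = Y2 :&: X ->
    (forall i, i \in Y2 -> i \notin X -> s i = z) -> agree Y1 t s -> agree Y2 t s.
  move=> E Hs2 /forall_inP H; apply/forall_inP => i iY2.
  case: (boolP (i \in X)) => iX; last by rewrite tz // Hs2.
  have : i \in Y1 :&: X by rewrite E inE iY2 iX.
  by rewrite inE => /andP[/H].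
by apply/idP/idP; apply: agreeW => // i iY; apply: Hs; rewrite inE iY ?orbT.
Qed.

Lemma marg_supported0 X P Y s i : supported X P -> i \in Y -> i \notin X ->
  s i != z -> marg P Y s = 0.
Proof.
move=> HP iY iX si; rewrite margE; apply: big1 => t _.
case: (boolP (agree Y t s)) => [/forall_inP /(_ i iY) /eqP ti|]; last by rewrite mul0r.
by rewrite (HP t i) ?mulr0 // ti.
Qed.

Definition constraint_index := ({set 'I_n} * 'I_n * 'I_n * F)%type.

Definition constraint_map X C P : {ffun (constraint_index + F) -> R^o} :=
  [ffun j : constraint_index + F => match j with
   | inl (Y, a, b, s) =>
       if C Y a b then marg P Y s - marg P Y (swap_idx a b s) else 0
   | inr s => if [exists i in ~: X, s i != z] then P s else 0 end].

Fact constraint_map_lin X C : linear (constraint_map X C).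
Proof.
move=> w P Q; apply/ffunP => [[[[[Y a] b] s]|s]]; rewrite !ffunE /=.
  by case: ifP => _; rewrite ?margD ?scaler0 ?addr0 //= /GRing.scale /=; ring.
by case: ifP => _; rewrite ?ffunE // scaler0 addr0.
Qed.
HB.instance Definition _ X C :=
  GRing.isLinear.Build R V _ _ (constraint_map X C) (constraint_map_lin X C).

Definition cspace X C := lker (linfun (constraint_map X C)).

Lemma mem_cspace X C P : reflect (supported X P /\ forall Y a b s, C Y a b ->
    marg P Y s = marg P Y (swap_idx a b s)) (P \in cspace X C).
Proof.
rewrite memv_ker lfunE /=.
apply: (iffP eqP) => [H|[HP HC]]; last first.
  apply/ffunP => [[[[[Y a] b] s]|s]]; rewrite !ffunE /=.
    by case: ifP => // /HC ->; rewrite subrr.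
  by case: ifP => // /exists_inP[i]; rewrite inE => /HP; apply.
have E j := congr1 (fun f : {ffun _ -> R^o} => f j) H; split=> [s i iX si|Y a b s HC].
  by have := E (inr s); rewrite !ffunE; case: exists_inP => // -[]; exists i; rewrite ?inE.
by have := E (inl (Y, a, b, s)); rewrite !ffunE /= HC => /eqP; rewrite subr_eq0 => /eqP.
Qed.

(* Slicing at taxon x: [slice x c P] is P(x = c) with x reset to z, and
   [unslice x c Q] puts Q back at x = c. *)
Definition slice x c P : V := [ffun s : F => if s x == z then P (upd x c s) else 0].
Definition unslice x c Q : V := [ffun s : F => if s x == c then Q (upd x z s) else 0].

Fact slice_lin x c : linear (slice x c).
Proof.
move=> w P Q; apply/ffunP => s; rewrite !ffunE; case: ifP => _; rewrite ?ffunE //.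
by rewrite scaler0 addr0.
Qed.
HB.instance Definition _ x c := GRing.isLinear.Build R V V _ (slice x c) (slice_lin x c).

Fact unslice_lin x c : linear (unslice x c).
Proof.
move=> w P Q; apply/ffunP => s; rewrite !ffunE; case: ifP => _; rewrite ?ffunE //.
by rewrite scaler0 addr0.
Qed.
HB.instance Definition _ x c :=
  GRing.isLinear.Build R V V _ (unslice x c) (unslice_lin x c).

Lemma unslice_slice x P : \sum_c unslice x c (slice x c P) = P.
Proof.
apply/ffunP => s; rewrite sum_ffunE (bigD1 (s x)) //= [X in _ + X]big1 ?addr0 => [|c cs].
  by rewrite ffunE eqxx ffunE upd_at eqxx upd_upd upd_id.
by rewrite ffunE eq_sym (negbTE cs).
Qed.

Lemma slice_unslice x c c' X Q : x \notin X -> supported X Q ->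
  slice x c (unslice x c' Q) = if c == c' then Q else 0.
Proof.
move=> xX HQ; apply/ffunP => s; rewrite ffunE [X in if _ then X else _]ffunE upd_at.
case: (boolP (s x == z)) => sx.
  by rewrite upd_upd (upd_id (eqP sx)); case: (c == c'); rewrite ?ffunE.
by case: (c == c'); rewrite ?ffunE // (HQ s x).
Qed.

Lemma marg_slice x c P Y s : marg (slice x c P) Y s =
  (if x \in Y then (s x == z)%:R else 1) * marg P (x |: Y) (upd x c s).
Proof.
rewrite margE (sum_upd x) (bigD1 z) //= [X in _ + X = _]big1 ?addr0 => [|e ez]; last first.
  by apply: big1 => t _; rewrite ffunE upd_at (negbTE ez) mulr0.
rewrite margE (sum_upd x) (bigD1 c) //= [X in _ * (_ + X)]big1 ?addr0 => [|e ec]; last first.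
  apply: big1 => t _; suff -> : agree (x |: Y) (upd x e t) (upd x c s) = false by rewrite mul0r.
  apply/negbTE/forall_inP => /(_ x); rewrite setU11 !upd_at => /(_ isT) /eqP ee.
  by rewrite ee eqxx in ec.
rewrite mulr_sumr; apply: eq_bigr => t /eqP tx.
rewrite ffunE upd_at eqxx upd_upd (upd_id tx) mulrA; congr (_ * _).
rewrite (agree_D1 x Y t s) agree_upd -mulnb natrM.
by case: (boolP (x \in Y)) => xY /=; rewrite ?mul1r // tx eq_sym.
Qed.

Lemma marg_via_slice x P Y s : x \in Y ->
  marg P Y s = marg (slice x (s x) P) Y (upd x z s).
Proof.
by move=> xY; rewrite marg_slice xY upd_at eqxx mul1r upd_upd upd_id ?(setUidPr _) ?sub1set.
Qed.

Lemma supported_slices x X P :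
  supported (x |: X) P <-> forall c, supported X (slice x c P).
Proof.
split=> [HP c s i iX si|HS].
  rewrite ffunE; case: ifP => // /eqP sx.
  have ix : i != x by apply: contraNneq si => ->; rewrite sx.
  by apply: (HP _ i); rewrite ?updE ?(negbTE ix) // !inE negb_or ix.
rewrite -(unslice_slice x P) => s i; rewrite !inE negb_or => /andP[ix iX] si.
rewrite sum_ffunE big1 // => c _; rewrite ffunE; case: ifP => // _.
by apply: (HS c _ i); rewrite // updE (negbTE ix).
Qed.

Definition extend x (A : {vspace V}) :=
  (\sum_(c : 'I_k) (linfun (unslice x c)) @: A)%VS.

Section Extend.
Variables (x : 'I_n) (X : {set 'I_n}) (A : {vspace V}).
Hypotheses (suppA : forall Q, Q \in A -> supported X Q) (xX : x \notin X).

Lemma memv_unslice_img c (u : V) : u \in (linfun (unslice x c) @: A)%VS ->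
  exists2 Q, Q \in A & u = unslice x c Q.
Proof. by case/memv_imgP => Q QA ->; exists Q => //; rewrite lfunE. Qed.

Lemma slice_unslice_img c c' (u : V) : u \in (linfun (unslice x c') @: A)%VS ->
  slice x c u = if c == c' then slice x c' u else 0.
Proof.
case/memv_unslice_img => Q QA ->.
by rewrite !(slice_unslice _ _ xX (suppA QA)) eqxx; case: (c == c').
Qed.

Lemma mem_extend P : (P \in extend x A) = [forall c, slice x c P \in A].
Proof.
apply/idP/forallP => [/memv_sumP [us Hus ->] c|H].
  rewrite linear_sum (bigD1 c) //= big1 ?addr0 => [|c' cc'].
    have [Q QA ->] := memv_unslice_img (Hus c isT).
    by rewrite (slice_unslice _ _ xX (suppA QA)) eqxx.
  by rewrite (slice_unslice_img c (Hus c' isT)) eq_sym (negbTE cc').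
rewrite -(unslice_slice x P); apply: memv_sumr => c _.
have -> : unslice x c (slice x c P) = linfun (unslice x c) (slice x c P).
  by rewrite lfunE.
exact: memv_img.
Qed.

Lemma dim_extend : \dim (extend x A) = (k * \dim A)%N.
Proof.
have inj c : (A :&: lker (linfun (unslice x c)) = 0)%VS.
  apply/eqP; rewrite -subv0; apply/subvP => Q /memv_capP [QA].
  rewrite memv_ker lfunE /= memv0 => /eqP Q0.
  by have := slice_unslice c c xX (suppA QA); rewrite eqxx Q0 linear0 => <-.
have /directvP -> : directv (extend x A).
  apply/directv_sum_independent => us Hus Hsum c _.
  have [Q QA Hq] := memv_unslice_img (Hus c isT).
  have := congr1 (slice x c) Hsum; rewrite linear_sum linear0 (bigD1 c) //=.
  rewrite [X in _ + X]big1 ?addr0 => [|c' cc']; last first.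
    by rewrite (slice_unslice_img c (Hus c' isT)) eq_sym (negbTE cc').
  by rewrite Hq (slice_unslice _ _ xX (suppA QA)) eqxx => ->; rewrite linear0.
rewrite /=; under eq_bigr do rewrite limg_dim_eq ?inj //.
by rewrite sum_nat_const card_ord.
Qed.

End Extend.

(* With no taxa and no constraints, the space is the line of the Dirac tensor
   at the constant assignment z. *)
Definition const_z : F := [ffun => z].
Definition space0 := cspace set0 (fun _ _ _ => false).

Lemma space0_supported Q : Q \in space0 -> supported set0 Q.
Proof. by case/mem_cspace. Qed.

Lemma dim_space0 : \dim space0 = 1%N.
Proof.
have -> : space0 = <[delta const_z]>%VS.
  apply/vspaceP => P; apply/mem_cspace/vlineP => [[HP _]|[w ->]].
    exists (P const_z); apply/ffunP => s; rewrite !ffunE /GRing.scale /=.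
    case: (s =P const_z) => [->|/eqP sz]; rewrite ?mulr1 ?mulr0 //.
    have [i si] : exists i, s i != z.
      by apply/existsP; apply: contraNT sz; rewrite negb_exists => /forallP si;
        apply/eqP/ffunP => i; rewrite ffunE; apply/eqP; rewrite -[_ == _]negbK si.
    by apply: (HP s i); rewrite ?inE.
  split=> // s i _ si; rewrite !ffunE /GRing.scale /=.
  case: (s =P const_z) => [sz|_]; last by rewrite mulr0.
  by rewrite sz ffunE eqxx in si.
rewrite dim_vline; case: eqP => // /(congr1 (fun f : V => f const_z)).
by rewrite !ffunE eqxx => /eqP; rewrite oner_eq0.
Qed.

Definition taxa (t : rtree 'I_n) : {set 'I_n} := [set i | i \in leaves t].
Definition tree_clades (t : rtree 'I_n) Y a b := induced_clade (mem Y) t a b.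
Definition tree_space (t : rtree 'I_n) := cspace (taxa t) (tree_clades t).

Lemma tree_space_supported (t : rtree 'I_n) Q :
  Q \in tree_space t -> supported (taxa t) Q.
Proof. by case/mem_cspace. Qed.

Lemma tree_space_NodeC (l r : rtree 'I_n) : tree_space (Node l r) = tree_space (Node r l).
Proof.
have XE : taxa (Node l r) = taxa (Node r l).
  by apply/setP => i; rewrite !inE !mem_cat orbC.
apply/vspaceP => P; rewrite /tree_space /tree_clades XE.
by apply/mem_cspace/mem_cspace => -[HP HC]; split => // Y a b s;
  rewrite induced_clade_NodeC => /HC.
Qed.

(* A single leaf x has no 2-clades: its space is the extension of space0. *)
Lemma tree_space_leaf x : tree_space (Leaf x) = extend x space0.
Proof.
have eX : taxa (Leaf x) = x |: set0 by apply/setP => i; rewrite !inE orbF.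
apply/vspaceP => P; rewrite (mem_extend space0_supported) ?inE //.
apply/mem_cspace/forallP => [[HP _] c|H].
  by apply/mem_cspace; split => //; move: c; apply/supported_slices; rewrite -eX.
split; first by rewrite eX; apply/supported_slices => c; apply: space0_supported.
by move=> Y a b s; rewrite /tree_clades induced_clade_leaf.
Qed.

(* Any two leaves y, y' of t form a 2-clade of t|{y, y'}; hence all one-taxon
   marginals of a tensor of the space of t coincide. *)
Lemma marg1_tree_space (t : rtree 'I_n) Q y y' u v : uniq (leaves t) ->
  Q \in tree_space t -> y \in leaves t -> y' \in leaves t -> u y = v y' ->
  marg Q [set y] u = marg Q [set y'] v.
Proof.
move=> ut /mem_cspace[_ HC] yt y't uv; case: (y =P y') => [eyy'|/eqP yy'].
  subst y'; by apply: marg_agree; apply/forall_inP => i; rewrite inE => /eqP ->; rewrite uv.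
have clade : tree_clades t [set y; y'] y y'.
  apply: induced_clade_pair => //; apply: uniq_perm; rewrite ?filter_uniq //=.
    by rewrite inE yy'.
  move=> i; rewrite mem_filter !inE.
  by apply/idP/idP => [/andP[]//|H]; rewrite H /=; case/orP: H => /eqP ->.
rewrite (marg_sum_upd Q u (x:=y') (Y:=[set y])); last by rewrite inE eq_sym.
rewrite (marg_sum_upd Q v (x:=y) (Y:=[set y'])); last by rewrite inE.
apply: eq_bigr => e _; rewrite [y' |: _]setUC (HC _ _ _ _ clade).
apply: marg_agree; apply: agree_pair => //; first by rewrite swapE tpermL !upd_at.
by rewrite swapE tpermR !updE (negbTE yy') (eq_sym y' y) (negbTE yy').
Qed.

Section Graft.
Variables (x : 'I_n) (t' : rtree 'I_n) (y0 : 'I_n).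
Hypotheses (xt : x \notin leaves t') (ut : uniq (leaves t')) (y0t : y0 \in leaves t').
Local Notation t := (Node (Leaf x) t').

Lemma taxa_graft : taxa t = x |: taxa t'.
Proof. by apply/setP => i; rewrite !inE. Qed.

Lemma x_notin_taxa : x \notin taxa t'.
Proof. by rewrite inE. Qed.

Lemma leaf_neq_x i : i \in leaves t' -> i != x.
Proof. by apply: contraTneq => ->. Qed.

Lemma y0_neq_x : y0 != x. Proof. exact: leaf_neq_x. Qed.

Lemma tree_clades_setU1 Y a b : tree_clades t' (x |: Y) a b = tree_clades t' Y a b.
Proof.
rewrite /tree_clades /induced_clade (@restrict_eq_in _ (mem (x |: Y)) (mem Y)) //.
by move=> i it; rewrite !inE (negbTE (leaf_neq_x it)).
Qed.

Lemma tree_clades_mem Y a b : tree_clades t' Y a b ->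
  [/\ a \in Y, b \in Y, a != x & b != x].
Proof. by case/induced_clade_mem => aY bY /leaf_neq_x ax /leaf_neq_x bx. Qed.

Definition pair_asg c d : F :=
  [ffun i => if i == x then c else if i == y0 then d else z].

Lemma pair_asg_x c d : pair_asg c d x = c. Proof. by rewrite ffunE eqxx. Qed.

Lemma pair_asg_y0 c d : pair_asg c d y0 = d.
Proof. by rewrite ffunE (negbTE y0_neq_x) eqxx. Qed.

Lemma pair_asg_swap c d : pair_asg d c = swap_idx x y0 (pair_asg c d).
Proof.
apply/ffunP => i; rewrite swapE !ffunE.
case: (tpermP x y0 i) => [->|->|/eqP ix /eqP iy]; rewrite ?eqxx ?(negbTE y0_neq_x) //.
by rewrite (negbTE ix) (negbTE iy).
Qed.

Definition sym_defect P : {ffun spairs k -> R^o} :=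
  [ffun p => marg P [set x; y0] (pair_asg (val p).1 (val p).2)
             - marg P [set x; y0] (pair_asg (val p).2 (val p).1)].

Fact sym_defect_lin : linear sym_defect.
Proof. by move=> w P Q; apply/ffunP => p; rewrite !ffunE !margD /GRing.scale /=; ring. Qed.
HB.instance Definition _ := GRing.isLinear.Build R V _ _ sym_defect sym_defect_lin.

Lemma sym_defect_eq0 P c d : sym_defect P = 0 ->
  marg P [set x; y0] (pair_asg c d) = marg P [set x; y0] (pair_asg d c).
Proof.
move=> P0; have defect p := congr1 (fun f : {ffun spairs k -> R^o} => f p) P0.
case: (ltngtP c d) => [cd|dc|/val_inj -> //].
  by have := defect (exist _ (c, d) cd); rewrite !ffunE /= => /eqP; rewrite subr_eq0 => /eqP.
by have := defect (exist _ (d, c) dc); rewrite !ffunE /= => /eqP; rewrite subr_eq0 => /eqP.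
Qed.

Lemma clade_x_y0 : tree_clades t [set x; y0] x y0.
Proof.
rewrite /tree_clades induced_clade_graft !inE eqxx /= (@restrict_single _ _ _ y0).
  by rewrite (eq_sym x y0) y0_neq_x perm_refl orbT.
rewrite -(filter_pred1_uniq ut y0t); apply: eq_in_filter => i it.
by rewrite !inE (negbTE (leaf_neq_x it)).
Qed.

Lemma slices_of_tree_space P :
  P \in tree_space t -> [forall c, slice x c P \in tree_space t'].
Proof.
case/mem_cspace => HP HC; apply/forallP => c; apply/mem_cspace; split.
  by move: c; apply/supported_slices; rewrite -taxa_graft.
move=> Y a b s H; case/tree_clades_mem: (H) => aY bY ax bx.
rewrite !marg_slice swap_out // upd_swap //; congr (_ * _); apply: HC.
by rewrite /tree_clades induced_clade_graft -/(tree_clades _ _ _ _) tree_clades_setU1 H.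
Qed.

Lemma sym_defect_of_tree_space P : P \in tree_space t -> sym_defect P = 0.
Proof.
case/mem_cspace => _ HC; apply/ffunP => p; rewrite !ffunE pair_asg_swap.
by rewrite -HC ?subrr //; apply: clade_x_y0.
Qed.

Lemma marg_pair_shift Q y v1 v2 : Q \in tree_space t' -> y \in leaves t' ->
  v1 x = z -> v2 x = z -> v1 y = v2 y0 ->
  marg Q [set x; y] v1 = marg Q [set x; y0] v2.
Proof.
move=> HQ yt v1x v2x vy; have HP := tree_space_supported HQ.
have dropx w : w \in leaves t' -> [set x; w] :&: taxa t' = [set w] :&: taxa t'.
  move=> wt; apply/setP => i; rewrite !inE.
  by case: (i =P x) => [->|_] //=; rewrite (negbTE xt) !andbF.
rewrite (marg_supported (Y' := [set y]) HP (dropx y yt)); last first.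
  by move=> i; rewrite !inE => /orP[/orP[]|] /eqP -> //; rewrite ?inE yt.
rewrite [RHS](marg_supported (Y' := [set y0]) HP (dropx y0 y0t)); last first.
  by move=> i; rewrite !inE => /orP[/orP[]|] /eqP -> //; rewrite ?inE y0t.
exact: (marg1_tree_space ut HQ yt y0t vy).
Qed.

Lemma marg_xy_via_y0 P y u : (forall c, slice x c P \in tree_space t') ->
  y \in leaves t' -> marg P [set x; y] u = marg P [set x; y0] (pair_asg (u x) (u y)).
Proof.
move=> HS yt.
rewrite (marg_via_slice P u (x:=x)) ?inE ?eqxx //.
rewrite (marg_via_slice P (pair_asg _ _) (x:=x)) ?inE ?eqxx // pair_asg_x.
apply: marg_pair_shift; rewrite ?upd_at //.
by rewrite !updE (negbTE (leaf_neq_x yt)) (negbTE y0_neq_x) pair_asg_y0.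
Qed.

Lemma old_clades_sym P Y a b s : (forall c, slice x c P \in tree_space t') ->
  tree_clades t' Y a b -> marg P Y s = marg P Y (swap_idx a b s).
Proof.
move=> HS H; case/tree_clades_mem: (H) => aY bY ax bx.
case: (boolP (x \in Y)) => xY.
  rewrite (marg_via_slice P s (x:=x)) // (marg_via_slice P (swap_idx a b s) (x:=x)) //.
  rewrite swap_out // upd_swap //.
  by case/mem_cspace: (HS (s x)) => _; apply.
rewrite (marg_sum_upd P s xY) (marg_sum_upd P (swap_idx a b s) xY).
apply: eq_bigr => c _.
have unslice_marg u : marg P (x |: Y) (upd x c u) = marg (slice x c P) Y u.
  by rewrite marg_slice (negbTE xY) mul1r.
by rewrite !unslice_marg; case/mem_cspace: (HS c) => _; apply.
Qed.

Lemma marg_reduce_xy P Y y u : supported (taxa t) P -> x \in Y ->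
  filter (mem Y) (leaves t') = [:: y] ->
  (forall i, i \in Y -> i \notin taxa t -> u i = z) ->
  marg P Y u = marg P [set x; y] u.
Proof.
move=> HP xY Yt Hu; have yt : y \in leaves t'.
  by have := mem_head y [::]; rewrite -Yt mem_filter => /andP[].
apply: (marg_supported HP) => [|i]; last first.
  rewrite inE => /orP [iY|]; first exact: Hu.
  by case/set2P => -> ; rewrite taxa_graft !inE ?eqxx ?yt ?orbT.
apply/setP => i; rewrite taxa_graft !inE.
case: (i =P x) => [->|ix] /=; first by rewrite xY.
have := congr1 (fun l => i \in l) Yt; rewrite mem_filter inE /= => ->.
by rewrite inE; case: (i =P y) => [->|]; rewrite ?yt.
Qed.

Lemma new_clade_sym P Y y s : supported (taxa t) P ->
  (forall c, slice x c P \in tree_space t') -> sym_defect P = 0 ->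
  x \in Y -> filter (mem Y) (leaves t') = [:: y] ->
  marg P Y s = marg P Y (swap_idx x y s).
Proof.
move=> HP HS P0 xY Yt; have yt : y \in leaves t'.
  by have := mem_head y [::]; rewrite -Yt mem_filter => /andP[].
have [xX yX] : x \in taxa t /\ y \in taxa t by rewrite taxa_graft !inE eqxx yt orbT.
case: (boolP [exists i in Y, (i \notin taxa t) && (s i != z)]).
  case/exists_inP => i iY /andP [iX si].
  have [ix iy] : x != i /\ y != i by split; apply: contraNneq iX => <-.
  by rewrite (marg_supported0 HP iY iX si) (marg_supported0 HP iY iX) // swap_out.
rewrite negb_exists_in => /forall_inP sz.
have {}sz i : i \in Y -> i \notin taxa t -> s i = z.
  by move=> iY iX; have := sz i iY; rewrite iX negbK => /eqP.
rewrite (marg_reduce_xy HP xY Yt sz) (marg_reduce_xy HP xY Yt); last first.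
  by move=> i iY iX; rewrite swap_out ?sz //; apply: contraNneq iX => <-.
rewrite (marg_xy_via_y0 s HS yt) (marg_xy_via_y0 (swap_idx x y s) HS yt).
by rewrite !swapE tpermL tpermR sym_defect_eq0.
Qed.

Lemma tree_space_of_slices P : [forall c, slice x c P \in tree_space t'] ->
  sym_defect P = 0 -> P \in tree_space t.
Proof.
move=> /forallP HS P0.
have HP : supported (taxa t) P.
  by rewrite taxa_graft; apply/supported_slices => c; apply: tree_space_supported (HS c).
apply/mem_cspace; split => // Y a b s.
rewrite /tree_clades induced_clade_graft -/(tree_clades _ _ _ _) => /orP [|].
  exact: old_clades_sym.
case/andP => xY; case Et: (restrict (mem Y) t') => [[y|l r]|] // /andP[ab pe].
have Yt : filter (mem Y) (leaves t') = [:: y].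
  by have := restrict_leaves (mem Y) t'; rewrite Et.
move: ab; have : (a \in [:: x; y]) && (b \in [:: x; y]).
  by rewrite !(perm_mem pe) !inE !eqxx orbT.
rewrite !inE => /andP[] /orP[]/eqP-> /orP[]/eqP-> ab; try by rewrite eqxx in ab.
  exact: (new_clade_sym s HP HS P0 xY Yt).
by rewrite swapC; apply: (new_clade_sym s HP HS P0 xY Yt).
Qed.

Lemma tree_space_graft :
  tree_space t = (extend x (tree_space t') :&: lker (linfun sym_defect))%VS.
Proof.
apply/vspaceP => P; rewrite memv_cap (mem_extend (@tree_space_supported t') x_notin_taxa).
rewrite memv_ker lfunE /=; apply/idP/andP => [HP|[HS /eqP P0]].
  by split; [exact: slices_of_tree_space | apply/eqP; exact: sym_defect_of_tree_space].
exact: tree_space_of_slices.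
Qed.

(* Surjectivity of the symmetry defects: the Dirac tensor at the assignment
   rho c e (x = c, e on the leaves of t', z elsewhere) has all its slices in
   the space of t', and these tensors realize every defect. *)
Definition rho c e : F :=
  [ffun i => if i == x then c else if i \in leaves t' then e else z].

Lemma delta_rho_slice c' c e : slice x c' (delta (rho c e)) \in tree_space t'.
Proof.
apply/mem_cspace; split.
  move: c'; apply/supported_slices; rewrite -taxa_graft => s i iX si.
  rewrite ffunE; case: (s =P rho c e) => [sr|] //.
  rewrite taxa_graft !inE negb_or in iX; case/andP: iX => ix it.
  by rewrite sr ffunE (negbTE ix) (negbTE it) eqxx in si.
move=> Y a b s H; case/induced_clade_mem: (H) => aY bY at' bt'.
have rho_sym u : delta (rho c e) (swap_idx a b u) = delta (rho c e) u.
  have rho_fix : swap_idx a b (rho c e) = rho c e.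
    by apply: swap_fix; rewrite !ffunE !(negbTE (leaf_neq_x _)) ?at' ?bt'.
  by rewrite !ffunE -{1}rho_fix (inj_eq (@swap_inj a b)).
apply: marg_swap_inv => // u.
by rewrite /slice ffunE [in RHS]ffunE swap_out ?leaf_neq_x // upd_swap ?leaf_neq_x // rho_sym.
Qed.

Lemma agree_rho c e c0 d0 :
  agree [set x; y0] (rho c e) (pair_asg c0 d0) = (c == c0) && (e == d0).
Proof.
have rho_y0 : rho c e y0 = e by rewrite ffunE (negbTE y0_neq_x) y0t.
have rho_x : rho c e x = c by rewrite ffunE eqxx.
apply/idP/andP => [/forall_inP H|[/eqP<- /eqP<-]].
  have := H x; have := H y0; rewrite !inE !eqxx ?orbT.
  by rewrite pair_asg_x pair_asg_y0 rho_x rho_y0 => /(_ isT) -> /(_ isT) ->.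
by apply: (agree_pair (erefl [set x; y0])); rewrite ?pair_asg_x ?pair_asg_y0.
Qed.

(* The preimage of a defect g: the value g (c, e) when c < e, and 0 otherwise. *)
Definition pair_value (g : {ffun spairs k -> R^o}) c e : R :=
  if insub (c, e) is Some p then g p else 0.

Definition lift_defect g : V := \sum_c \sum_e pair_value g c e *: delta (rho c e).

Lemma sym_defect_lift g : sym_defect (lift_defect g) = g.
Proof.
have M c0 d0 : marg (lift_defect g) [set x; y0] (pair_asg c0 d0) = pair_value g c0 d0.
  rewrite /lift_defect marg_sum (bigD1 c0) //= [X in _ + X]big1 ?addr0 => [|c cc0].
    rewrite marg_sum (bigD1 d0) //= [X in _ + X]big1 ?addr0 => [|e ed0].
      by rewrite margZ marg_delta agree_rho !eqxx mulr1.
    by rewrite margZ marg_delta agree_rho eqxx (negbTE ed0) mulr0.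
  rewrite marg_sum big1 // => e _.
  by rewrite margZ marg_delta agree_rho (negbTE cc0) mulr0.
apply/ffunP => -[[c d] cd]; rewrite ffunE !M /=.
rewrite /pair_value (insubT (fun p : 'I_k * 'I_k => (p.1 < p.2)%N) cd) insubF ?subr0 //=.
by rewrite ltnNge ltnW.
Qed.

Lemma sym_defect_onto :
  (linfun sym_defect @: extend x (tree_space t'))%VS = fullv.
Proof.
apply/eqP; rewrite eqEsubv subvf /=; apply/subvP => g _.
have -> : g = linfun sym_defect (lift_defect g) by rewrite lfunE /= sym_defect_lift.
apply: memv_img.
rewrite (mem_extend (@tree_space_supported t') x_notin_taxa); apply/forallP => c'.
rewrite /lift_defect linear_sum; apply: rpred_sum => c _; rewrite linear_sum.
by apply: rpred_sum => e _; rewrite linearZ rpredZ // delta_rho_slice.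
Qed.

(* Rank-nullity for the graft. *)
Lemma dim_graft : (\dim (tree_space t) + #|{: spairs k}| = k * \dim (tree_space t'))%N.
Proof.
rewrite tree_space_graft -(dim_extend (@tree_space_supported t') x_notin_taxa).
rewrite -(limg_ker_dim (linfun sym_defect) (extend x (tree_space t'))) sym_defect_onto.
by rewrite dimvf /dim /= muln1.
Qed.

End Graft.

Lemma dim_tree_space_graft x (t' : rtree 'I_n) : x \notin leaves t' ->
  uniq (leaves t') -> (\dim (tree_space t') * 2 = k ^ size (leaves t') + k)%N ->
  (\dim (tree_space (Node (Leaf x) t')) * 2 = k ^ (size (leaves t')).+1 + k)%N.
Proof.
move=> xt ut IH; have [y0 y0t] : exists y0, y0 \in leaves t'.
  by case: (leaves t') (size_leaves_gt0 t') => // y0 ? _; exists y0; rewrite mem_head.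
have := dim_graft xt ut y0t; have := card_spairs k; have := ltn_ord z.
rewrite expnS; nia.
Qed.

(* Induction along the caterpillar: every internal vertex has a leaf child,
   so t is a leaf or a leaf grafted onto a smaller caterpillar. *)
Lemma dim_tree_space (t : rtree 'I_n) : caterpillar t -> uniq (leaves t) ->
  (\dim (tree_space t) * 2 = k ^ size (leaves t) + k)%N.
Proof.
elim: t => [x _ _|l IHl r IHr] /=.
  rewrite tree_space_leaf (dim_extend space0_supported) ?inE // dim_space0.
  by rewrite muln1 expn1 addnn muln2.
case/andP => /andP [lr cl] cr; rewrite cat_uniq => /and3P [ul dis ur].
case: l IHl lr cl ul dis => [x|l1 l2] IHl lr cl ul dis.
  apply: dim_tree_space_graft (IHr cr ur) => //.
  by apply: contra dis => xr; apply/hasP; exists x; rewrite ?inE.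
case: r IHr lr cr ur dis => [x|r1 r2] // IHr _ _ _ dis.
rewrite tree_space_NodeC size_cat addn1; apply: dim_tree_space_graft (IHl cl ul) => //.
by apply: contra dis => xl; apply/hasP; exists x; rewrite ?inE.
Qed.

End Tensors.

Section UESet.
Variables (R : realType) (n k : nat) (z : 'I_k) (t : rtree 'I_n).
Hypothesis t_on : tree_on t.
Local Notation V := (tensor R n k).

Definition total_mass (P : V) : R^o := \sum_s P s.

Fact total_mass_lin : linear total_mass.
Proof.
move=> w P Q; rewrite /total_mass scaler_sumr -big_split /=.
by apply: eq_bigr => s _; rewrite !ffunE.
Qed.
HB.instance Definition _ := GRing.isLinear.Build R V R^o _ total_mass total_mass_lin.

(* All taxa are leaves of t, so the support condition is void. *)
Lemma supported_taxa (P : V) : supported z (taxa t) P.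
Proof. by move=> s i; rewrite inE (perm_mem t_on) mem_enum. Qed.

Lemma UE_setE (P : V) :
  UE_set t P <-> linfun total_mass P = 1 /\ P \in tree_space R z t.
Proof.
rewrite lfunE /=; split => [[P1 HC]|[P1 /mem_cspace [_ HC]]]; split => //.
  apply/mem_cspace; split => [|Y a b s]; first exact: supported_taxa.
  rewrite /tree_clades /induced_clade; case Et: (restrict _ t) => [t'|] // H.
  exact: (HC Y t' a b Et H s).
by move=> Y t' a b Et H s; apply: HC; rewrite /tree_clades /induced_clade Et.
Qed.

Lemma UE_set_delta : UE_set t (delta R (const_z n z)).
Proof.
apply/UE_setE; rewrite lfunE /=; split.
  rewrite /total_mass (bigD1 (const_z n z)) //= big1 ?addr0 ?ffunE ?eqxx // => s sz.
  by rewrite ffunE (negbTE sz).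
apply/mem_cspace; split => [|Y a b s /induced_clade_mem [aY bY _ _]].
  exact: supported_taxa.
apply: marg_swap_inv => // u.
have fixz : swap_idx a b (const_z n z) = const_z n z by apply: swap_fix; rewrite !ffunE.
by rewrite !ffunE -{1}fixz (inj_eq (@swap_inj _ _ a b)).
Qed.

End UESet.

Unset Implicit Arguments.

Theorem corollary4p3 (R : realType) (k n : nat) (t : rtree 'I_n) :
  (2 <= k)%N -> (1 <= n)%N -> tree_on t -> caterpillar t ->
  affine_dim (@UE_set R n k t) (((k ^ n + k) %/ 2) - 1)%N.
Proof.
move=> k_ge2 _ t_on t_cat; pose z : 'I_k := Ordinal (ltnW k_ge2).
have t_uniq : uniq (leaves t) by rewrite (perm_uniq t_on) enum_uniq.
have t_size : size (leaves t) = n by rewrite (perm_size t_on) size_enum_ord.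
have dim2 := dim_tree_space R z t_cat t_uniq; rewrite t_size in dim2.
rewrite -dim2 mulnK //.
exact: affine_dim_hyperplane (UE_setE z t_on) (UE_set_delta R z t_on).
Qed.
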